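(* Let $\mathbf{P}=\{p_n(x)\}_{n\ge0}$ be a sequence of complex polynomials with $\deg p_n=n$, $p_0=1$, and let $\bar{\mathbf{P}}=\{\bar p_n(x)\}$ with $\bar p_0(x)=1$, $\bar p_n(x)=xp_{n-1}(x)$ for $n\ge1$. Then for all $n\ge0$, $$A_{n+1}(x;\bar{\mathbf{P}})=(1+nx)A_n(x;\mathbf{P})+x(1-x)A_n'(x;\mathbf{P}),$$ where $'$ denotes the derivative in $x$.
   Context: For any sequence $\mathbf{Q}=\{q_n\}$ with $\deg q_n=n$, $q_0=1$, the Eulerian numbers $A_{n,k}(\mathbf{Q})$ ($0\le k\le n$) are the unique coefficients with $q_n(x)=\sum_{k=0}^{n}A_{n,k}(\mathbf{Q})\binom{x+n-k-1}{n}$, where $\binom{y}{n}=y(y-1)\cdots(y-n+1)/n!$, and $A_n(x;\mathbf{Q})=\sum_{k=0}^n A_{n,k}(\mathbf{Q})x^k$. *)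

From HB Require Import structures.
From mathcomp Require Import all_boot all_order all_algebra.
From Stdlib Require Import ClassicalEpsilon.
Set Implicit Arguments. Unset Strict Implicit. Unset Printing Implicit Defensive.
Import Order.TTheory GRing.Theory Num.Theory.
Local Open Scope ring_scope.

(* Coefficient field: any numClosedFieldType C (the complex numbers are one). *)

(* binpoly n k = binom(x + n - k - 1, n) as a polynomial in x, where
   binom(y, n) = y (y-1) ... (y-n+1) / n!. The shift n-k-1 is an integer
   (it is -1 when k = n). *)
Definition binpoly (C : numClosedFieldType) (n k : nat) : {poly C} :=
  (n`!%:R)^-1 *:
    \prod_(i < n) ('X + (((Posz n - Posz k - 1) - Posz i)%:~R)%:P).

Definition eulerian_spec (C : numClosedFieldType) (q : {poly C}) (n : nat)
    (a : nat -> C) : Prop :=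
  q = \sum_(k < n.+1) a k *: binpoly C n k.

Definition eulerian_num (C : numClosedFieldType) (Q : nat -> {poly C})
    (n : nat) : nat -> C :=
  epsilon (inhabits (fun _ => 0)) (eulerian_spec (Q n) n).

Definition eulerian_poly (C : numClosedFieldType) (Q : nat -> {poly C})
    (n : nat) : {poly C} :=
  \sum_(k < n.+1) eulerian_num Q n k *: 'X^k.

Definition bar_seq (C : numClosedFieldType) (P : nat -> {poly C}) :
    nat -> {poly C} :=
  fun n => if n is m.+1 then 'X * P m else 1.

From HB Require Import structures.
From mathcomp Require Import all_boot all_order all_algebra.
From mathcomp Require Import zify ring.
From Stdlib Require Import ClassicalEpsilon.
Import Order.TTheory GRing.Theory Num.Theory.
Local Open Scope ring_scope.

(* The polynomials B_{n,k} := binom(x+n-k-1, n), 0 <= k <= n, form a basis of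
   the polynomials of degree at most n: evaluated at x = 1, ..., n+1 they give
   a unitriangular matrix, since B_{n,k}(j+1) = 0 for j < k and B_{n,k}(k+1) = 1.
   Hence A_{n,k}(Q) is well defined.  Multiplication by x acts on this basis by
     x B_{n,k} = (k+1) B_{n+1,k} + (n-k) B_{n+1,k+1},
   so x p_n has Eulerian numbers (j+1) A_{n,j} + (n-j+1) A_{n,j-1}, and the
   generating polynomial of these numbers is (1 + n x) A_n + x (1-x) A_n'. *)

Section UnitriangularSystem.

Variables (R : pzRingType) (N : nat) (f : nat -> nat -> R).
Hypothesis f_diag : forall k, (k <= N)%N -> f k k = 1.
Hypothesis f_upper : forall j k, (j < k)%N -> (k <= N)%N -> f j k = 0.

Lemma unitriangular_solvable (w : nat -> R) n : (n <= N)%N ->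
  exists a : nat -> R, forall j, (j <= n)%N -> \sum_(k < n.+1) a k * f j k = w j.
Proof.
elim: n => [|n IHn] leSnN.
  exists (fun=> w 0%N) => j; rewrite leqn0 => /eqP ->.
  by rewrite big_ord1 f_diag // mulr1.
have [a ha] := IHn (ltnW leSnN).
pose b k := if k == n.+1 then w n.+1 - \sum_(i < n.+1) a i * f n.+1 i else a k.
exists b => j le_jSn; rewrite big_ord_recr /= /b eqxx.
under eq_bigr => i _ do rewrite (ltn_eqF (ltn_ord i)).
case: ltngtP le_jSn => // [lt_jSn _|-> _]; last by rewrite f_diag // mulr1 addrC subrK.
by rewrite f_upper // mulr0 addr0 ha.
Qed.

Lemma unitriangular_inj (a : nat -> R) :
  (forall j, (j <= N)%N -> \sum_(k < N.+1) a k * f j k = 0) ->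
  forall k, (k <= N)%N -> a k = 0.
Proof.
move=> sum0; suff a0 m : (m <= N.+1)%N -> forall k, (k < m)%N -> a k = 0.
  by move=> k; apply: (a0 N.+1).
elim: m => // m IHm lt_mSN k; rewrite ltnS leq_eqVlt => /predU1P[->|]; last first.
  exact: (IHm (ltnW lt_mSN)).
have := sum0 m lt_mSN; rewrite (bigD1 (Ordinal lt_mSN)) //= f_diag // mulr1.
rewrite big1 ?addr0 // => i /negbTE neq_im.
case: (ltngtP i m) => [lt_im|lt_mi|eq_im]; last first.
  by move: neq_im; rewrite -val_eqE /= eq_im eqxx.
- by rewrite f_upper ?mulr0 // -ltnS.
- by rewrite (IHm (ltnW lt_mSN)) ?mul0r.
Qed.

End UnitriangularSystem.

Arguments unitriangular_solvable {R N f}.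
Arguments unitriangular_inj {R N f}.

Lemma poly_natr_roots_eq0 (R : numDomainType) n (p : {poly R}) :
  (size p <= n.+1)%N -> (forall j, (j <= n)%N -> p.[j.+1%:R] = 0) -> p = 0.
Proof.
move=> + p_roots; apply: contraTeq => p_neq0.
pose s := mkseq (fun j => j.+1%:R : R) n.+1.
have s_roots : all (root p) s.
  apply/allP => x /mapP[j]; rewrite mem_iota add0n => /andP[_ lt_jSn] ->.
  by apply/eqP/p_roots; rewrite -ltnS.
have s_uniq : uniq s.
  by rewrite map_inj_uniq ?iota_uniq // => i j /eqP; rewrite eqr_nat eqSS => /eqP.
by have := max_poly_roots p_neq0 s_roots s_uniq; rewrite size_mkseq -ltnNge.
Qed.

Section BinomialBasis.

Context {C : numClosedFieldType}.

Lemma horner_binpoly n k x : (binpoly C n k).[x] =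
  (n`!%:R)^-1 * \prod_(i < n) (x + ((Posz n - Posz k - 1) - Posz i)%:~R).
Proof.
rewrite /binpoly hornerZ horner_prod; congr (_ * _).
by apply: eq_bigr => i _; rewrite hornerD hornerX hornerC.
Qed.

Lemma horner_binpoly_lt n j k : (j < k)%N -> (k <= n)%N ->
  (binpoly C n k).[j.+1%:R] = 0.
Proof.
move=> lt_jk le_kn; rewrite horner_binpoly.
have lt_i0n : (j + n - k < n)%N by lia.
rewrite (bigD1 (Ordinal lt_i0n)) //= -[j.+1%:R]/((Posz j.+1)%:~R) -intrD.
have -> : Posz j.+1 + (Posz n - Posz k - 1 - Posz (j + n - k)) = 0 by lia.
by rewrite mul0r mulr0.
Qed.

Lemma horner_binpoly_diag n k : (k <= n)%N -> (binpoly C n k).[k.+1%:R] = 1.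
Proof.
move=> le_kn; rewrite horner_binpoly.
under eq_bigr => i _.
  rewrite -[k.+1%:R]/((Posz k.+1)%:~R) -intrD.
  have -> : Posz k.+1 + (Posz n - Posz k - 1 - Posz i) = Posz (n - i).
    by have := ltn_ord i; lia.
  over.
by rewrite -natr_prod -ffact_prod ffactnn mulVf // pnatr_eq0 -lt0n fact_gt0.
Qed.

Lemma size_binpoly n k : (size (binpoly C n k) <= n.+1)%N.
Proof.
rewrite /binpoly (leq_trans (size_scale_leq _ _)) // size_prod; last first.
  by move=> i _; rewrite -size_poly_eq0 size_XaddC.
under eq_bigr do rewrite size_XaddC.
by rewrite sum_nat_const card_ord; lia.
Qed.

Lemma eulerian_spec_exists n (q : {poly C}) :
  (size q <= n.+1)%N -> exists a, eulerian_spec q n a.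
Proof.
move=> size_q.
pose B j k := (binpoly C n k).[j.+1%:R].
have [a ha] := unitriangular_solvable (f := B) (@horner_binpoly_diag n)
  (@horner_binpoly_lt n) (fun j => q.[j.+1%:R]) n (leqnn n).
exists a; apply/eqP; rewrite -subr_eq0; apply/eqP/(@poly_natr_roots_eq0 _ n).
  rewrite (leq_trans (size_polyD _ _)) // geq_max size_q size_polyN.
  apply: (leq_trans (size_sum _ _ _)); apply/bigmax_leqP => i _.
  exact: leq_trans (size_scale_leq _ _) (size_binpoly _ _).
move=> j le_jn; rewrite hornerD hornerN horner_sum -(ha j le_jn).
apply/eqP; rewrite subr_eq0; apply/eqP/eq_bigr => i _.
by rewrite hornerZ.
Qed.

Lemma eulerian_spec_unique n q (a b : nat -> C) :
  eulerian_spec q n a -> eulerian_spec q n b -> forall k, (k <= n)%N -> a k = b k.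
Proof.
move=> qa qb k le_kn; apply/eqP; rewrite -subr_eq0; apply/eqP; move: k le_kn.
apply: (unitriangular_inj (f := fun j k => (binpoly C n k).[j.+1%:R]))
  (@horner_binpoly_diag n) (@horner_binpoly_lt n) _ _.
move=> j _; apply: etrans (_ : _ = (q - q).[j.+1%:R]) _; last first.
  by rewrite subrr horner0.
rewrite {1}qa qb -sumrB horner_sum.
by apply: eq_bigr => i _; rewrite hornerD hornerN !hornerZ mulrBl.
Qed.

Lemma eulerian_poly_spec {Q : nat -> {poly C}} {n a} :
  eulerian_spec (Q n) n a -> eulerian_poly Q n = \sum_(k < n.+1) a k *: 'X^k.
Proof.
move=> Qa; have Qnum : eulerian_spec (Q n) n (eulerian_num Q n).
  by apply: epsilon_spec; exists a.
apply: eq_bigr => k _; congr (_ *: _).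
exact: eulerian_spec_unique Qnum Qa k (ltn_ord k).
Qed.

Lemma mulX_binpoly n k : (k <= n)%N ->
  'X * binpoly C n k =
    k.+1%:R *: binpoly C n.+1 k + (n - k)%N%:R *: binpoly C n.+1 k.+1.
Proof.
move=> le_kn.
set Pi := \prod_(i < n) ('X + (((Posz n - Posz k - 1) - Posz i)%:~R)%:P : {poly C}).
have prod_k : \prod_(i < n.+1)
    ('X + (((Posz n.+1 - Posz k - 1) - Posz i)%:~R)%:P : {poly C})
    = ('X + ((n - k)%N%:R)%:P) * Pi.
  rewrite big_ord_recl /=; congr (_ * _).
    by have -> : Posz n.+1 - Posz k - 1 - 0 = Posz (n - k) by lia.
  by apply: eq_bigr => i _; rewrite /bump /=; congr ('X + (_%:~R)%:P); lia.
have prod_Sk : \prod_(i < n.+1)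
    ('X + (((Posz n.+1 - Posz k.+1 - 1) - Posz i)%:~R)%:P : {poly C})
    = Pi * ('X - (k.+1%:R)%:P).
  rewrite big_ord_recr /=; congr (_ * _).
    by apply: eq_bigr => i _; congr ('X + (_%:~R)%:P); lia.
  have -> : Posz n.+1 - Posz k.+1 - 1 - Posz n = - Posz k.+1 by lia.
  by rewrite mulrNz polyCN.
rewrite /binpoly prod_k prod_Sk -/Pi factS natrM invfM.
set r := (n`!%:R : C)^-1; set s := (n.+1%:R : C)^-1.
have Sn_inv : s * n.+1%:R = 1 by rewrite mulVf ?pnatr_eq0.
rewrite -[in LHS](mul1r r) -[in LHS]Sn_inv natrB //.
rewrite -!mul_polyC !polyCM !polyCB !polyC_natr.
ring.
Qed.

End BinomialBasis.

(* The candidate Eulerian numbers A_{n+1,j}(\bar P) = (j+1) a_j + (n-j+1) a_{j-1},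
   for a_k = A_{n,k}(P), with the conventions a_{-1} = a_{n+1} = 0. *)
Definition bar_eulerian_coef {R : pzRingType} n (a : nat -> R) (j : nat) : R :=
  (if (j < n.+1)%N then j.+1%:R * a j else 0)
  + (if j is i.+1 then (n - i)%N%:R * a i else 0).

Lemma sum_bar_eulerian_coef (R : pzRingType) (V : lmodType R) n (a : nat -> R)
    (F : nat -> V) :
  \sum_(j < n.+2) bar_eulerian_coef n a j *: F j =
    \sum_(k < n.+1) (k.+1%:R * a k) *: F k
    + \sum_(k < n.+1) ((n - k)%N%:R * a k) *: F k.+1.
Proof.
rewrite /bar_eulerian_coef; under eq_bigr do rewrite scalerDl.
rewrite big_split /=; congr (_ + _); last by rewrite big_ord_recl scale0r add0r.
rewrite big_ord_recr /= ltnn scale0r addr0.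
by apply: eq_bigr => i _; rewrite ltn_ord.
Qed.

Lemma eulerian_spec_mulX (C : numClosedFieldType) n (q : {poly C}) a :
  eulerian_spec q n a -> eulerian_spec ('X * q) n.+1 (bar_eulerian_coef n a).
Proof.
move=> qa; rewrite /eulerian_spec sum_bar_eulerian_coef qa mulr_sumr -big_split /=.
apply: eq_bigr => i _; rewrite -scalerAr mulX_binpoly -1?ltnS //.
by rewrite scalerDr !scalerA !(mulrC (a i)).
Qed.

Lemma bar_eulerian_coef_poly (R : comNzRingType) n (a : nat -> R) :
  \sum_(j < n.+2) bar_eulerian_coef n a j *: 'X^j =
    (1 + n%:R *: 'X) * (\sum_(k < n.+1) a k *: 'X^k)
    + ('X * (1 - 'X)) * (\sum_(k < n.+1) a k *: 'X^k)^`().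
Proof.
rewrite sum_bar_eulerian_coef raddf_sum !mulr_sumr -!big_split /=.
apply: eq_bigr => i _; rewrite derivZ derivXn natrB -1?ltnS //.
have mulX_derivXn : 'X * ('X^(i.-1) *+ i) = 'X^i *+ i :> {poly R}.
  by case: (nat_of_ord i) => [|m]; rewrite ?mulr0n ?mulr0 // mulrnAr exprS.
rewrite -!mul_polyC !polyCM polyCB !polyC_natr exprS.
rewrite [X in _ = _ + X](_ : _ = (1 - 'X) * (a i)%:P * ('X * ('X^(i.-1) *+ i))).
  by rewrite mulX_derivXn; ring.
ring.
Qed.

Theorem theorem3p3 (C : numClosedFieldType) (P : nat -> {poly C})
  (hdeg : forall n : nat, size (P n) = n.+1) (h0 : P 0%N = 1) (n : nat) :
  eulerian_poly (bar_seq P) n.+1 =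
    (1 + n%:R *: 'X) * eulerian_poly P n
    + ('X * (1 - 'X)) * (eulerian_poly P n)^`().
Proof.
have [a Pa] := @eulerian_spec_exists C n (P n) (eq_leq (hdeg n)).
have barPa : eulerian_spec (bar_seq P n.+1) n.+1 (bar_eulerian_coef n a).
  exact: eulerian_spec_mulX.
rewrite (eulerian_poly_spec Pa) (eulerian_poly_spec barPa).
exact: bar_eulerian_coef_poly.
Qed.
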